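(* Let $\Sigma=\{\sigma_{\mathbf{a}|\mathbf{x}}\}$ be a no-signaling assemblage of operators acting on $\mathbb{C}^d$. If $\Sigma$ is on the edge of the set of no-signaling assemblages, then $$\sum_{\mathbf{a}|\mathbf{x}}\mathrm{rank}(\sigma_{\mathbf{a}|\mathbf{x}})\le\Big(\prod_{i=1}^n\mathcal{X}_i-1\Big)\Big(\prod_{i=1}^n\mathcal{A}_i\Big)d.$$
   Context: Fix $n\ge 1$, integers $\mathcal{A}_i,\mathcal{X}_i\ge 1$ and $d\ge1$; write $\mathbf{a}|\mathbf{x}=a_1\dots a_n|x_1\dots x_n$ with $a_i\in\{0,\dots,\mathcal{A}_i-1\}$, $x_i\in\{0,\dots,\mathcal{X}_i-1\}$; the sum runs over all such indices. A no-signaling assemblage is a collection of positive semidefinite operators $\sigma_{\mathbf{a}|\mathbf{x}}$ on $\mathbb{C}^d$ with $\sum_{\mathbf{a}}\sigma_{\mathbf{a}|\mathbf{x}}=\rho_B$ for all $\mathbf{x}$ ($\rho_B$ a fixed density operator) and such that for every $I=\{i_1,\dots,i_s\}\subset\{1,\dots,n\}$, $1\le s<n$, the sum $\sum_{a_j:\,j\notin I}\sigma_{\mathbf{a}|\mathbf{x}}$ depends only on $a_{i_k},x_{i_k}$. An LHS assemblage is one of the form $\sigma_{\mathbf{a}|\mathbf{x}}=\sum_j q_j\prod_i p^{(A_i)}_j(a_i|x_i)\rho_j$ with probability weights $q_j$, density operators $\rho_j$ and conditional distributions $p^{(A_i)}_j$. $\Sigma$ is on the edge if any decomposition $\Sigma=\epsilon\Sigma_1+(1-\epsilon)\Sigma_2$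 with $\epsilon\in[0,1]$, $\Sigma_1$ LHS and $\Sigma_2$ no-signaling forces $\epsilon=0$. *)

From HB Require Import structures.
From mathcomp Require Import all_boot all_order all_algebra.
From mathcomp Require Import reals complex.
Set Implicit Arguments. Unset Strict Implicit. Unset Printing Implicit Defensive.
Import Order.TTheory GRing.Theory Num.Theory.
Local Open Scope ring_scope.

Section Assemblages.
Variable R : realType.
Local Notation C := (R[i]).

Definition adjmx (m k : nat) (M : 'M[C]_(m, k)) : 'M[C]_(k, m) :=
  (map_mx Num.conj M)^T.

(* positive semidefinite operator on C^d ; 0 <= z means z is real and nonneg *)
Definition psd (d : nat) (M : 'M[C]_d) : Prop :=
  adjmx M = M /\ forall v : 'cV[C]_d, 0 <= (adjmx v *m M *m v) 0 0.

Definition density (d : nat) (M : 'M[C]_d) : Prop := psd M /\ \tr M = 1.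

Variables (n : nat) (A X : 'I_n -> nat) (d : nat).

Definition outs := {dffun forall i : 'I_n, 'I_(A i)}.
Definition ins := {dffun forall i : 'I_n, 'I_(X i)}.

Definition assemblage := outs -> ins -> 'M[C]_d.

Definition no_signaling (S : assemblage) : Prop :=
  (forall a x, psd (S a x)) /\
  (exists rhoB : 'M[C]_d, density rhoB /\ forall x, \sum_(a : outs) S a x = rhoB) /\
  (forall I : {set 'I_n}, I != set0 -> I != setT ->
     forall (a a' : outs) (x x' : ins),
       (forall i, i \in I -> a i = a' i /\ x i = x' i) ->
       \sum_(b : outs | [forall i in I, b i == a i]) S b x =
       \sum_(b : outs | [forall i in I, b i == a' i]) S b x').

Definition LHS (S : assemblage) : Prop :=
  exists (m : nat) (q : 'I_m -> C) (rho : 'I_m -> 'M[C]_d)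
         (p : 'I_m -> forall i : 'I_n, 'I_(X i) -> 'I_(A i) -> C),
    [/\ (forall j, 0 <= q j) /\ \sum_j q j = 1,
        (forall j, density (rho j)),
        (forall j i y b, 0 <= p j i y b),
        (forall j i y, \sum_b p j i y b = 1) &
        forall a x, S a x = \sum_j (q j * \prod_i p j i (x i) (a i)) *: rho j].

Definition on_edge (S : assemblage) : Prop :=
  forall (eps : C) (S1 S2 : assemblage),
    0 <= eps <= 1 -> LHS S1 -> no_signaling S2 ->
    (forall a x, S a x = eps *: S1 a x + (1 - eps) *: S2 a x) ->
    eps = 0.

End Assemblages.

From Pilot Require Import Defs.
From mathcomp Require Import all_boot all_order all_algebra zify.
From mathcomp Require Import perm reals complex ring.
Import Order.TTheory GRing.Theory Num.Theory.
Set Implicit Arguments. Unset Strict Implicit. Unset Printing Implicit Defensive.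

(* If the bound fails, averaging over the deterministic strategies [f] (one map
   x_i |-> a_i per party) gives an [f] with
   sum_x rank σ_{f(x)|x} > (prod_i X_i - 1) d,
   so the ranges of the d x d operators σ_{f(x)|x} share a nonzero vector [v].
   A positive operator whose range contains [v] dominates a small multiple of
   the pure state |v><v|.  Hence, for a small eps > 0, subtracting eps times the
   deterministic LHS assemblage (f, |v><v|) from Σ and renormalising leaves a
   no-signaling assemblage, and Σ is not on the edge. *)

Local Open Scope ring_scope.

Section Adjoint.
Variable R : realType.
Local Notation C := R[i].

Lemma adjmxE m k (M : 'M[C]_(m, k)) i j : adjmx M i j = (M j i)^*.
Proof. by rewrite !mxE. Qed.

Lemma adjmx0 m k : adjmx (0 : 'M[C]_(m, k)) = 0.
Proof. by apply/matrixP=> i j; rewrite adjmxE !mxE conjC0. Qed.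

Lemma adjmxD m k (M N : 'M[C]_(m, k)) : adjmx (M + N) = adjmx M + adjmx N.
Proof. by apply/matrixP=> i j; rewrite !(mxE, adjmxE) rmorphD. Qed.

Lemma adjmxZ m k (c : C) (M : 'M[C]_(m, k)) : adjmx (c *: M) = c^* *: adjmx M.
Proof. by apply/matrixP=> i j; rewrite !(mxE, adjmxE) rmorphM. Qed.

Lemma adjmxB m k (M N : 'M[C]_(m, k)) : adjmx (M - N) = adjmx M - adjmx N.
Proof. by apply/matrixP=> i j; rewrite !(mxE, adjmxE) rmorphB. Qed.

Lemma adjmxM m k l (M : 'M[C]_(m, k)) (N : 'M[C]_(k, l)) :
  adjmx (M *m N) = adjmx N *m adjmx M.
Proof.
apply/matrixP=> i j; rewrite !(mxE, adjmxE) rmorph_sum; apply: eq_bigr => r _.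
by rewrite !adjmxE rmorphM mulrC.
Qed.

Lemma adjmxK m k (M : 'M[C]_(m, k)) : adjmx (adjmx M) = M.
Proof. by apply/matrixP=> i j; rewrite !adjmxE conjCK. Qed.

End Adjoint.

Section SemiInnerProduct.
Variables (R : realType) (d : nat).
Local Notation C := R[i].
Implicit Types (M N P : 'M[C]_d) (u v w : 'cV[C]_d).

Definition dotmx u v : C := (adjmx u *m v) 0 0.

Definition qform M u : C := (adjmx u *m M *m u) 0 0.

Lemma conj_dotmx u v : (dotmx u v)^* = dotmx v u.
Proof.
rewrite /dotmx !mxE rmorph_sum; apply: eq_bigr => r _.
by rewrite !adjmxE rmorphM /= conjCK mulrC.
Qed.

Lemma dotmx_gt0 v : v != 0 -> 0 < dotmx v v.
Proof.
move=> v0; have vv : dotmx v v = \sum_k v k 0 * (v k 0)^*.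
  by rewrite /dotmx mxE; apply: eq_bigr => k _; rewrite adjmxE mulrC.
have ge0 k : 0 <= v k 0 * (v k 0)^* by apply: mul_conjC_ge0.
rewrite lt_def vv sumr_ge0 // andbT; apply/eqP => /(psumr_eq0P (fun k _ => ge0 k)) vk0.
move/eqP: v0; apply; apply/matrixP => i j; rewrite (ord1 j) mxE.
by apply/eqP; rewrite -mul_conjC_eq0 vk0.
Qed.

Lemma dotmxBl u v w : dotmx (u - v) w = dotmx u w - dotmx v w.
Proof. by rewrite /dotmx adjmxB mulmxBl [in LHS]mxE [X in _ + X]mxE. Qed.

Lemma dotmxZl c u v : dotmx (c *: u) v = c^* * dotmx u v.
Proof. by rewrite /dotmx adjmxZ -scalemxAl [in LHS]mxE. Qed.

Lemma dotmxBr u v w : dotmx u (v - w) = dotmx u v - dotmx u w.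
Proof. by rewrite /dotmx mulmxBr [in LHS]mxE [X in _ + X]mxE. Qed.

Lemma dotmxZr c u v : dotmx u (c *: v) = c * dotmx u v.
Proof. by rewrite /dotmx -scalemxAr [in LHS]mxE. Qed.

Lemma qformE M u : qform M u = dotmx u (M *m u).
Proof. by rewrite /qform -mulmxA. Qed.

Lemma qformD M N u : qform (M + N) u = qform M u + qform N u.
Proof. by rewrite /qform mulmxDr mulmxDl mxE. Qed.

Lemma qformZ c M u : qform (c *: M) u = c * qform M u.
Proof. by rewrite /qform -scalemxAr -scalemxAl mxE. Qed.

Lemma qformB M N u : qform (M - N) u = qform M u - qform N u.
Proof. by rewrite qformD -scaleN1r qformZ mulN1r. Qed.

Lemma qform_outer v u : qform (v *m adjmx v) u = dotmx v u * (dotmx v u)^*.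
Proof.
by rewrite /qform -!mulmxA mulmxA [in LHS]mxE big_ord1 conj_dotmx mulrC.
Qed.

Lemma psd0 : psd (0 : 'M[C]_d).
Proof. by split=> [|u]; rewrite ?adjmx0 // mulmx0 mul0mx mxE. Qed.

Lemma psdD M N : psd M -> psd N -> psd (M + N).
Proof.
move=> [hM qM] [hN qN]; split=> [|u]; first by rewrite adjmxD hM hN.
by rewrite -/(qform _ u) qformD addr_ge0 // ?qM ?qN.
Qed.

Lemma psd_sum (I : finType) (F : I -> 'M[C]_d) :
  (forall i, psd (F i)) -> psd (\sum_i F i).
Proof. by move=> hF; apply: big_ind => //; [apply: psd0 | apply: psdD]. Qed.

Lemma psdZ c M : 0 <= c -> psd M -> psd (c *: M).
Proof.
move=> c0 [hM qM]; split=> [|u]; first by rewrite adjmxZ hM geC0_conj.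
by rewrite -/(qform _ u) qformZ mulr_ge0 ?qM.
Qed.

Lemma psd_outer v : psd (v *m adjmx v).
Proof.
split=> [|u]; first by rewrite adjmxM adjmxK.
by rewrite -/(qform _ u) qform_outer mul_conjC_ge0.
Qed.

(* The [+ 1] spares a case split on [qform P w = 0]. *)
Lemma psd_cauchy_schwarz P w u : psd P ->
  dotmx (P *m w) u * (dotmx (P *m w) u)^* <= (qform P w + 1) * qform P u.
Proof.
move=> [hP qP]; set z := dotmx (P *m w) u; set c := qform P w.
have c0 : 0 <= c by apply: qP.
have c1 : 0 < c + 1 by rewrite ltr_wpDl.
have zE : dotmx w (P *m u) = z by rewrite /z /dotmx adjmxM hP mulmxA.
have zcE : dotmx u (P *m w) = z^* by rewrite conj_dotmx.
pose s := z / (c + 1).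
have sc : s^* = z^* / (c + 1) by rewrite rmorphM fmorphV /= (geC0_conj (ltW c1)).
have expand : qform P (u - s *: w) = qform P u - s * z^* - s^* * z + s^* * s * c.
  rewrite qformE mulmxBr -scalemxAr dotmxBl dotmxZl !dotmxBr !dotmxZr zE zcE.
  by rewrite -!qformE -/c; ring.
rewrite -subr_ge0.
have -> : (c + 1) * qform P u - z * z^* = (c + 1) * qform P (u - s *: w) + z * z^* / (c + 1).
  by rewrite expand sc /s; field; rewrite gt_eqF.
exact: addr_ge0 (mulr_ge0 (ltW c1) (qP _)) (divr_ge0 (mul_conjC_ge0 _) (ltW c1)).
Qed.

Lemma psd_sub_outer P w t : psd P -> 0 <= t -> t * (qform P w + 1) <= 1 ->
  psd (P - t *: (P *m w *m adjmx (P *m w))).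
Proof.
move=> psdP t0 ht; have [hP qP] := psdP; split=> [|u].
  by rewrite adjmxB adjmxZ adjmxM adjmxK (geC0_conj t0) hP.
rewrite -/(qform _ u) qformB qformZ qform_outer subr_ge0.
apply: le_trans (ler_wpM2l t0 (psd_cauchy_schwarz w u psdP)) _.
by rewrite mulrA ler_piMl ?qP.
Qed.

Definition pure_state v : 'M[C]_d := (dotmx v v)^-1 *: (v *m adjmx v).

Lemma pure_state_density v : v != 0 -> density (pure_state v).
Proof.
move=> v0; have vv0 := dotmx_gt0 v0; split.
  by apply: psdZ (psd_outer v); rewrite invr_ge0 ltW.
by rewrite mxtraceZ mxtrace_mulC /mxtrace big_ord1 mulVf // gt_eqF.
Qed.

End SemiInnerProduct.

Section CommonImage.
Variables (F : fieldType) (d : nat).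

Lemma mxrank_bigcap_seq (I : eqType) (U : I -> 'M[F]_d) (s : seq I) :
  (\sum_(i <- s) \rank (U i) + d <= \rank (\bigcap_(i <- s) U i)%MS + size s * d)%N.
Proof.
elim: s => [|i s IH]; first by rewrite !big_nil mxrank1 /=; lia.
rewrite !big_cons /= mulSn.
have := mxrank_sum_cap (U i) (\bigcap_(j <- s) U j)%MS.
have := rank_leq_col (U i + \bigcap_(j <- s) U j)%MS.
have arith (sum rs ri rj ij sd : nat) : (sum <= d -> sum + ij = ri + rj ->
    rs + d <= rj + sd -> ri + rs + d <= ij + (d + sd))%N by lia.
by move=> h1 h2; apply: arith h1 h2 IH.
Qed.

Lemma mxrank_bigcap (I : finType) (U : I -> 'M[F]_d) :
  (\sum_i \rank (U i) + d <= \rank (\bigcap_i U i)%MS + #|I| * d)%N.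
Proof. by rewrite cardE enumT; apply: mxrank_bigcap_seq. Qed.

Lemma common_image (I : finType) (M : I -> 'M[F]_d) :
  ((#|I| - 1) * d < \sum_i \rank (M i))%N ->
  exists2 v : 'cV[F]_d, v != 0 & exists w, forall i, M i *m w i = v.
Proof.
move=> hrank; have := mxrank_bigcap (fun i => (M i)^T).
set W := (\bigcap_i (M i)^T)%MS; under eq_bigr do rewrite mxrank_tr.
move=> hW; have W0 : W != 0.
  apply: contraTneq hrank => W0; rewrite W0 mxrank0 in hW.
  by rewrite -leqNgt; case: #|I| hW => [|k] hW; rewrite ?sub0n ?subSS ?subn0; nia.
have vW i : (nz_row W <= (M i)^T)%MS.
  exact: submx_trans (nz_row_sub W) (bigcapmx_inf i _ _).
exists (nz_row W)^T; first by rewrite trmx_eq0 nz_row_eq0.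
exists (fun i => (nz_row W *m pinvmx (M i)^T)^T) => i.
by rewrite -{1}(trmxK (M i)) -trmx_mul mulmxKpV.
Qed.

End CommonImage.

Section Strategies.
Variables (n : nat) (A X : 'I_n -> nat).

Definition strategy := {dffun forall i : 'I_n, {ffun 'I_(X i) -> 'I_(A i)}}.

Definition outcome (f : strategy) (x : ins X) : outs A := [ffun i => f i (x i)].

Implicit Types (f : strategy) (x : ins X) (a : outs A).

Lemma outcomeE f x a : (a == outcome f x) = [forall i, a i == f i (x i)].
Proof.
apply/eqP/forallP => [-> i|h]; first by rewrite ffunE.
by apply/ffunP => i; rewrite ffunE; apply/eqP.
Qed.

(* Relabelling the outputs [a i] <-> [a' i] of every party maps the strategies
   with outcome [a] on [x] into those with outcome [a']. *)
Lemma card_outcome_fiber_le x a a' :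
  (#|[pred f | outcome f x == a]| <= #|[pred f | outcome f x == a']|)%N.
Proof.
pose swap f : strategy := [ffun i => [ffun y => tperm (a i) (a' i) (f i y)]].
have swapK : involutive swap.
  by move=> f; apply/ffunP => i; apply/ffunP => y; rewrite !ffunE tpermK.
rewrite -(card_imset _ (inv_inj swapK)); apply: subset_leq_card.
apply/subsetP => _ /imsetP[f /eqP hf ->]; rewrite inE; apply/eqP/ffunP => i.
by rewrite !ffunE -hf ffunE tpermL.
Qed.

Lemma card_outcome_fiber x a a' :
  #|[pred f | outcome f x == a]| = #|[pred f | outcome f x == a']|.
Proof. by apply/eqP; rewrite eqn_leq !card_outcome_fiber_le. Qed.

Lemma sum_outcome x (F : outs A -> nat) :
  (\sum_f F (outcome f x) = \sum_a #|[pred f | outcome f x == a]| * F a)%N.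
Proof.
rewrite (partition_big (outcome^~ x) predT) //=; apply: eq_bigr => a _.
rewrite (eq_bigr (fun=> F a)); last by move=> f /eqP ->.
by rewrite sum_nat_const; congr (_ * _)%N; apply: eq_card => f; rewrite !inE.
Qed.

Lemma card_strategy_fiber x a :
  (#|outs A| * #|[pred f | outcome f x == a]| = #|{: strategy}|)%N.
Proof.
have := sum_outcome x (fun=> 1%N); rewrite sum1_card => ->.
rewrite (eq_bigr (fun=> #|[pred f | outcome f x == a]|)) => [|b _].
  by rewrite sum_nat_const mulnC.
by rewrite muln1 (card_outcome_fiber x b a).
Qed.

Lemma sum_strategies (r : outs A -> ins X -> nat) :
  (#|{: strategy}| * \sum_a \sum_x r a x =
     #|outs A| * \sum_f \sum_x r (outcome f x) x)%N.
Proof.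
rewrite exchange_big big_distrr [in RHS]exchange_big [in RHS]big_distrr /=.
apply: eq_bigr => x _; rewrite (sum_outcome x (r^~ x)) !big_distrr /=.
by apply: eq_bigr => a _; rewrite mulnA card_strategy_fiber.
Qed.

Lemma exists_strategy_gt (r : outs A -> ins X -> nat) B :
  (#|outs A| * B < \sum_a \sum_x r a x)%N ->
  exists f, (B < \sum_x r (outcome f x) x)%N.
Proof.
move=> hB; have [a0 _] : exists a0 : outs A, true.
  case: (pickP (@predT (outs A))) => [a0|outs0]; first by exists a0.
  by move: hB; rewrite big_pred0.
have strategy_gt0 : (0 < #|{: strategy}|)%N.
  by apply/card_gt0P; exists [ffun i => [ffun=> a0 i]].
apply/existsP; apply: contraLR hB; rewrite negb_exists -leqNgt => /forallP small.
rewrite -(leq_pmul2l strategy_gt0) sum_strategies mulnCA leq_mul2l; apply/orP; right.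
apply: (@leq_trans (\sum_(f : strategy) B)); first by apply: leq_sum => f _; rewrite leqNgt small.
by rewrite sum_nat_const.
Qed.

End Strategies.

Lemma sum_pred1_scale (K : pzRingType) (V : lmodType K) (I : finType) (P : pred I)
    (c : I) (v : V) :
  \sum_(b | P b) (b == c)%:R *: v = (P c)%:R *: v.
Proof.
have [Pc|nPc] := boolP (P c).
  rewrite (bigD1 c) //= eqxx big1 ?addr0 // => b /andP[_ /negbTE->].
  by rewrite scale0r.
rewrite scale0r big1 // => b Pb.
by have [bc|] := eqVneq b c; [move: Pb; rewrite bc (negbTE nPc) | rewrite scale0r].
Qed.

Section Decomposition.
Variables (R : realType) (n : nat) (A X : 'I_n -> nat) (d : nat).
Local Notation C := R[i].
Local Notation assemblage := (assemblage R A X d).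
Implicit Types (f : strategy A X) (rho : 'M[C]_d) (a : outs A) (x : ins X).

Definition det_assemblage (f : strategy A X) (rho : 'M[C]_d) : assemblage :=
  fun a x => (a == outcome f x)%:R *: rho.

Lemma det_assemblage_LHS f rho : density rho -> Defs.LHS (det_assemblage f rho).
Proof.
move=> rho_density.
exists 1%N, (fun=> 1), (fun=> rho), (fun _ i y b => (b == f i y)%:R); split.
- by split=> [_|]; rewrite ?big_ord1 ?ler01.
- by [].
- by move=> j i y b; rewrite ler0n.
- move=> j i y; rewrite (bigD1 (f i y)) //= eqxx big1 ?addr0 // => b.
  by move=> /negbTE ->.
move=> a x; rewrite big_ord1 mul1r /det_assemblage outcomeE; congr (_ *: _).
case: (boolP [forall i, _]) => [/forallP ha|/forallPn[i /negbTE hai]].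
  by rewrite big1 // => i _; rewrite ha.
by rewrite (bigD1 i) //= hai mul0r.
Qed.

Lemma det_assemblage_marginal f rho (I : {set 'I_n}) a x :
  \sum_(b : outs A | [forall i in I, b i == a i]) det_assemblage f rho b x =
  [forall i in I, f i (x i) == a i]%:R *: rho.
Proof.
rewrite sum_pred1_scale; congr ((_ : bool)%:R *: _).
by apply: eq_forallb_in => i _; rewrite ffunE.
Qed.

Lemma det_assemblage_no_signaling f rho :
  density rho -> no_signaling (det_assemblage f rho).
Proof.
move=> [psd_rho tr_rho]; split; [|split].
- by move=> a x; apply: psdZ psd_rho; rewrite ler0n.
- by exists rho; split=> // x; rewrite sum_pred1_scale scale1r.
move=> I _ _ a a' x x' haxI; rewrite !det_assemblage_marginal.
by congr ((_ : bool)%:R *: _); apply: eq_forallb_in => i /haxI[-> ->].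
Qed.

Lemma no_signaling_residual (x0 : ins X) (S S1 : assemblage) (eps : C) :
  no_signaling S -> no_signaling S1 -> 0 <= eps < 1 ->
  (forall a x, psd (S a x - eps *: S1 a x)) ->
  no_signaling (fun a x => (1 - eps)^-1 *: (S a x - eps *: S1 a x)).
Proof.
move=> [_ [[rhoB [[_ trB] sumS]] margS]] [_ [[rhoB1 [[_ trB1] sumS1]] margS1]].
move=> /andP[eps0 eps1] psd_res.
have k0 : 0 <= (1 - eps)^-1 by rewrite invr_ge0 subr_ge0 ltW.
have psdS2 a x : psd ((1 - eps)^-1 *: (S a x - eps *: S1 a x)) by apply: psdZ.
have sumS2 x : \sum_a (1 - eps)^-1 *: (S a x - eps *: S1 a x) =
               (1 - eps)^-1 *: (rhoB - eps *: rhoB1).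
  by rewrite -scaler_sumr sumrB -scaler_sumr sumS sumS1.
split=> //; split.
  exists ((1 - eps)^-1 *: (rhoB - eps *: rhoB1)); split=> //; split.
    by rewrite -(sumS2 x0); apply: psd_sum.
  rewrite mxtraceZ linearB /= mxtraceZ trB trB1 mulr1 mulVf //.
  by rewrite subr_eq0 eq_sym lt_eqF.
move=> I I0 IT a a' x x' haxI; rewrite -!scaler_sumr !sumrB -!scaler_sumr.
by rewrite (margS I I0 IT a a' x x' haxI) (margS1 I I0 IT a a' x x' haxI).
Qed.

Lemma not_on_edge_of_psd_residual (x0 : ins X) (S S1 : assemblage) (eps : C) :
  no_signaling S -> Defs.LHS S1 -> no_signaling S1 -> 0 < eps < 1 ->
  (forall a x, psd (S a x - eps *: S1 a x)) -> ~ on_edge S.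
Proof.
move=> nsS lhs1 ns1 /andP[eps0 eps1] psd_res edge.
have eps_ne1 : 1 - eps != 0 by rewrite subr_eq0 eq_sym lt_eqF.
have decomp a x : S a x =
    eps *: S1 a x + (1 - eps) *: ((1 - eps)^-1 *: (S a x - eps *: S1 a x)).
  by rewrite scalerA mulfV // scale1r addrC subrK.
have eps_range : 0 <= eps < 1 by rewrite ltW.
have := edge eps S1 _ _ lhs1 (no_signaling_residual x0 nsS ns1 eps_range psd_res) decomp.
by rewrite !ltW // => /(_ isT) /eqP; rewrite gt_eqF.
Qed.

Lemma not_on_edge_of_common_image (x0 : ins X) (S : assemblage) (f : strategy A X)
    (v : 'cV[C]_d) (w : ins X -> 'cV[C]_d) :
  no_signaling S -> v != 0 -> (forall x, S (outcome f x) x *m w x = v) ->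
  ~ on_edge S.
Proof.
move=> nsS v0 hw; have psdS a x : psd (S a x) by case: nsS.
pose c x := qform (S (outcome f x) x) (w x).
have c0 x : 0 <= c x by case: (psdS (outcome f x) x) => _; apply.
pose T := dotmx v v; have T0 : 0 < T := dotmx_gt0 v0.
(* Any [t] with [t * (c x + 1) <= 1] for all [x] would do; [t := D^-1] also
   keeps the LHS weight [t * T] below 1. *)
pose D := T + \sum_x c x + 1.
have sum_c0 : 0 <= \sum_x c x by apply: sumr_ge0 => x _.
have D0 : 0 < D := ltr_wpDl (addr_ge0 (ltW T0) sum_c0) ltr01.
pose t := D^-1; have t0 : 0 < t by rewrite invr_gt0.
have t_small x : t * (c x + 1) <= 1.
  rewrite mulrC ler_pdivrMr // mul1r lerD2r.
  have c_le_sum : c x <= \sum_y c y by rewrite (bigD1 x) //= lerDl sumr_ge0.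
  by rewrite (le_trans c_le_sum) // lerDr ltW.
have eps_range : 0 < t * T < 1.
  rewrite mulr_gt0 //= mulrC ltr_pdivrMr // mul1r /D -addrA ltrDl.
  exact: ltr_wpDl sum_c0 ltr01.
apply: (not_on_edge_of_psd_residual x0 nsS (det_assemblage_LHS f (pure_state_density v0))
          (det_assemblage_no_signaling f (pure_state_density v0)) eps_range).
move=> a x; rewrite /det_assemblage; case: eqP => [->|_]; last first.
  by rewrite scale0r scaler0 subr0.
rewrite scale1r /pure_state scalerA mulfK ?gt_eqF // -(hw x).
exact: psd_sub_outer (psdS _ _) (ltW t0) (t_small x).
Qed.

End Decomposition.

Lemma card_dffun_ord n (B : 'I_n -> nat) :
  #|{dffun forall i : 'I_n, 'I_(B i)}| = (\prod_(i < n) B i)%N.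
Proof.
rewrite card_dep_ffun foldrE big_map big_enum /=.
by apply: eq_bigr => i _; rewrite card_ord.
Qed.

Theorem corollary1 (R : realType) (n : nat) (A X : 'I_n -> nat) (d : nat)
  (hn : (1 <= n)%N) (hA : forall i, (1 <= A i)%N) (hX : forall i, (1 <= X i)%N)
  (hd : (1 <= d)%N) (S : assemblage R A X d) :
  no_signaling S -> on_edge S ->
  (\sum_(a : outs A) \sum_(x : ins X) \rank (S a x) <=
     ((\prod_(i < n) X i) - 1) * (\prod_(i < n) A i) * d)%N.
Proof.
move=> nsS edge; rewrite -!card_dffun_ord leqNgt; apply/negP => hgt.
have hgt' : (#|outs A| * ((#|ins X| - 1) * d) < \sum_a \sum_x \rank (S a x))%N.
  by rewrite mulnCA mulnA.
have [f hf] := exists_strategy_gt hgt'.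
have [v v0 [w hw]] := common_image hf.
exact: (not_on_edge_of_common_image ([ffun i => Ordinal (hX i)] : ins X)) nsS v0 hw edge.
Qed.
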